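(* Let $G$ be an infinite locally finite graph, $F$ a subgraph of $G$, and $D$ a finite connected graph. If $F$ is faithful to $G$, then $F\square D$ is faithful to $G\square D$ (where $F\square D$ is regarded as a subgraph of $G\square D$ in the natural way).
   Context: $\square$ denotes the Cartesian product of graphs. A ray is a one-way infinite path; two rays of a graph $H$ are equivalent in $H$ if for every finite $S\subseteq V(H)$ some component of $H-S$ contains tails of both; the classes are the ends of $H$. A subgraph $A$ of $B$ is faithful to $B$ if (i) every end of $B$ contains a ray of $A$, and (ii) any two rays of $A$ are equivalent in $A$ if and only if they are equivalent in $B$. *)

From Stdlib Require Import List Relations.
Set Implicit Arguments.

Record graph (V : Type) := Graph { vert : V -> Prop; adj : V -> V -> Prop }.

Definition wf_graph V (H : graph V) : Prop :=
  (forall x y, adj H x y -> vert H x /\ vert H y) /\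
  (forall x y, adj H x y -> adj H y x) /\
  (forall x, ~ adj H x x).

Definition subgraph V (A B : graph V) : Prop :=
  (forall x, vert A x -> vert B x) /\ (forall x y, adj A x y -> adj B x y).

Definition finite_graph V (H : graph V) : Prop :=
  exists l : list V, forall x, vert H x -> In x l.

Definition infinite_graph V (H : graph V) : Prop := ~ finite_graph H.

Definition locally_finite V (H : graph V) : Prop :=
  forall v, vert H v -> exists l : list V, forall w, adj H v w -> In w l.

(* connected in H - S : reflexive-transitive closure of adjacency among
   vertices of H outside S, starting from a vertex of H outside S *)
Definition avoid_adj V (H : graph V) (S : list V) : relation V :=
  fun a b => adj H a b /\ ~ In a S /\ ~ In b S.

Definition conn_avoid V (H : graph V) (S : list V) (x y : V) : Prop :=
  vert H x /\ ~ In x S /\ clos_refl_trans V (avoid_adj H S) x y.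

Definition connected_graph V (H : graph V) : Prop :=
  forall x y, vert H x -> vert H y -> conn_avoid H nil x y.

Definition is_ray V (H : graph V) (r : nat -> V) : Prop :=
  (forall m n, r m = r n -> m = n) /\
  (forall n, vert H (r n)) /\
  (forall n, adj H (r n) (r (S n))).

(* r1, r2 equivalent in H: for every finite S ⊆ V(H), some component of H - S
   contains tails of both rays (the component being the class of some c). *)
Definition ray_equiv V (H : graph V) (r1 r2 : nat -> V) : Prop :=
  forall S : list V, (forall x, In x S -> vert H x) ->
    exists c k1 k2,
      (forall n, k1 <= n -> conn_avoid H S c (r1 n)) /\
      (forall n, k2 <= n -> conn_avoid H S c (r2 n)).

(* A faithful to B: (i) every end of B contains a ray of A;
   (ii) rays of A are equivalent in A iff equivalent in B. *)
Definition faithful V (A B : graph V) : Prop :=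
  (forall r, is_ray B r -> exists r', is_ray A r' /\ ray_equiv B r r') /\
  (forall r1 r2, is_ray A r1 -> is_ray A r2 ->
     (ray_equiv A r1 r2 <-> ray_equiv B r1 r2)).

Definition cart V W (H : graph V) (D : graph W) : graph (V * W) :=
  {| vert := fun p => vert H (fst p) /\ vert D (snd p);
     adj := fun p q =>
       (adj H (fst p) (fst q) /\ snd p = snd q /\ vert D (snd p)) \/
       (fst p = fst q /\ vert H (fst p) /\ adj D (snd p) (snd q)) |}.

(* The projection to H of a ray of H □ D is a walk in H that may pause and,
   D being finite, eventually leaves every finite set. Erasing its loops gives
   a ray of H that is a subsequence of the walk, hence has its tails in the
   same components of H - S for every finite S. Components of (H □ D) minus
   S × V(D) project into components of H - S; conversely, for a finite S'
   in H □ D a component of H minus the projection of S' lifts into a single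
   component of (H □ D) - S' because D is connected. So two rays of H □ D are
   equivalent iff the rays of H erased from them are, and faithfulness of F
   in G transfers to F □ D in G □ D. *)

From Stdlib Require Import Arith List Relations Lia Classical ClassicalEpsilon.
Set Implicit Arguments.

Section Tails.
Variables (V : Type) (H : graph V).

Definition tail_in (S : list V) (c : V) (s : nat -> V) : Prop :=
  exists k, forall n, k <= n -> conn_avoid H S c (s n).

Lemma ray_equiv_tail_in (s1 s2 : nat -> V) :
  ray_equiv H s1 s2 <->
  forall S, (forall x, In x S -> vert H x) ->
    exists c, tail_in S c s1 /\ tail_in S c s2.
Proof.
  unfold ray_equiv, tail_in; split; intros Hequiv S HS.
  - destruct (Hequiv S HS) as [c [k1 [k2 [H1 H2]]]].
    exists c; split; [exists k1 | exists k2]; assumption.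
  - destruct (Hequiv S HS) as [c [[k1 H1] [k2 H2]]].
    exists c, k1, k2; split; assumption.
Qed.

Definition same_tails (s1 s2 : nat -> V) : Prop :=
  forall S c, tail_in S c s1 <-> tail_in S c s2.

Lemma ray_equiv_same_tails (s1 s1' s2 s2' : nat -> V) :
  same_tails s1 s1' -> same_tails s2 s2' ->
  (ray_equiv H s1 s2 <-> ray_equiv H s1' s2').
Proof.
  intros E1 E2; rewrite !ray_equiv_tail_in.
  split; intros Hequiv S HS; destruct (Hequiv S HS) as [c [T1 T2]];
    exists c; split; first [apply E1 | apply E2]; assumption.
Qed.

Lemma rt_avoid_notin (S : list V) x y :
  clos_refl_trans V (avoid_adj H S) x y -> ~ In x S -> ~ In y S.
Proof.
  induction 1 as [x y [_ [_ Hy]] | | ]; auto.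
Qed.

Lemma conn_avoid_step (S : list V) c x y :
  conn_avoid H S c x -> avoid_adj H S x y -> conn_avoid H S c y.
Proof.
  intros [Hc [HcS Hcx]] Hxy.
  repeat split; [exact Hc | exact HcS |].
  eapply rt_trans; [exact Hcx | apply rt_step; exact Hxy].
Qed.

Definition lazy_walk (w : nat -> V) : Prop :=
  forall n, adj H (w n) (w (S n)) \/ w n = w (S n).

End Tails.

Definition leaves_finite_sets V (w : nat -> V) : Prop :=
  forall S : list V, exists N, forall n, N <= n -> ~ In (w n) S.

Definition subsequence V (p w : nat -> V) : Prop :=
  exists t : nat -> nat, (forall k, t k < t (S k)) /\ (forall k, p k = w (t k)).

Lemma subsequence_refl V (p : nat -> V) : subsequence p p.
Proof. exists (fun k => k); split; [lia | reflexivity]. Qed.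

Lemma same_tails_subsequence V (H : graph V) (w p : nat -> V) :
  lazy_walk H w -> leaves_finite_sets w -> subsequence p w -> same_tails H w p.
Proof.
  intros Hwalk Hleave [t [Ht_incr Hp]] S c.
  assert (Ht_ge : forall k, k <= t k)
    by (induction k; [lia | specialize (Ht_incr k); lia]).
  split.
  - intros [k Hk]; exists k; intros n Hn.
    rewrite Hp; apply Hk; specialize (Ht_ge n); lia.
  - intros [K HK]; destruct (Hleave S) as [N HN].
    set (k := max K N).
    assert (Hk : N <= t k) by (specialize (Ht_ge k); lia).
    exists (t k); intros n Hn; induction Hn as [| m Hm IH].
    + rewrite <- Hp; apply HK; lia.
    + destruct (Hwalk m) as [Hadj | <-]; [| exact IH].
      apply (conn_avoid_step IH); repeat split; [exact Hadj | apply HN; lia ..].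
Qed.

Lemma last_occurrence (P : nat -> Prop) N t :
  P t -> (forall n, N <= n -> ~ P n) ->
  exists t', t <= t' /\ P t' /\ forall n, t' < n -> ~ P n.
Proof.
  revert t; induction N as [| N IH]; intros t Pt Hbound.
  - exfalso; apply (Hbound t); [lia | exact Pt].
  - destruct (classic (P N)) as [PN | nPN].
    + exists N; split; [| split; [exact PN |]].
      * destruct (Nat.le_gt_cases t N) as [|Hlt]; [assumption |].
        exfalso; exact (Hbound t Hlt Pt).
      * intros n Hn; apply Hbound; exact Hn.
    + apply (IH t Pt); intros n Hn.
      destruct (Nat.eq_dec n N) as [-> | Hne]; [exact nPN |].
      apply Hbound; lia.
Qed.

Section LoopErasure.
Variables (V : Type) (H : graph V) (w : nat -> V) (last_visit : nat -> nat).
Hypothesis w_vert : forall n, vert H (w n).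
Hypothesis w_walk : lazy_walk H w.
Hypothesis last_visit_spec : forall t,
  t <= last_visit t /\ w (last_visit t) = w t /\
  forall n, last_visit t < n -> w n <> w t.

Fixpoint erase_time (k : nat) : nat :=
  match k with
  | 0 => last_visit 0
  | S k => last_visit (S (erase_time k))
  end.

Lemma erase_time_lt k : erase_time k < erase_time (S k).
Proof. simpl; destruct (last_visit_spec (S (erase_time k))); lia. Qed.

Lemma erase_time_mono i j : i < j -> erase_time i < erase_time j.
Proof.
  induction 1 as [| m _ IH]; [apply erase_time_lt |].
  specialize (erase_time_lt m); lia.
Qed.

Lemma erase_time_final k n : erase_time k < n -> w n <> w (erase_time k).
Proof.
  assert (Hlast : exists x, erase_time k = last_visit x)
    by (destruct k; eexists; reflexivity).
  destruct Hlast as [x ->]; destruct (last_visit_spec x) as [_ [-> Hafter]].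
  apply Hafter.
Qed.

Lemma erased_ray : is_ray H (fun k => w (erase_time k)).
Proof.
  split; [| split].
  - intros i j Hij; destruct (Nat.lt_trichotomy i j) as [Hlt | [Heq | Hlt]];
      [| exact Heq |]; exfalso.
    + exact (erase_time_final i (erase_time_mono Hlt) (eq_sym Hij)).
    + exact (erase_time_final j (erase_time_mono Hlt) Hij).
  - intros k; apply w_vert.
  - intros k; simpl.
    destruct (last_visit_spec (S (erase_time k))) as [_ [-> _]].
    destruct (w_walk (erase_time k)) as [Hadj | Heq]; [exact Hadj |].
    exfalso; exact (erase_time_final k (Nat.lt_succ_diag_r _) (eq_sym Heq)).
Qed.

End LoopErasure.

Lemma lazy_walk_subsequence_ray V (H : graph V) (w : nat -> V) :
  (forall n, vert H (w n)) -> lazy_walk H w -> leaves_finite_sets w ->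
  exists p, is_ray H p /\ subsequence p w.
Proof.
  intros Hvert Hwalk Hleave.
  assert (Hlast : forall t, exists t', t <= t' /\ w t' = w t /\
                                       forall n, t' < n -> w n <> w t).
  { intros t; destruct (Hleave (w t :: nil)) as [N HN].
    apply last_occurrence with (N := N); [reflexivity |].
    intros n Hn Heq; apply (HN n Hn); left; symmetry; exact Heq. }
  destruct (choice _ Hlast) as [last_visit Hlast_visit].
  exists (fun k => w (erase_time last_visit k)); split.
  - exact (erased_ray last_visit Hvert Hwalk Hlast_visit).
  - exists (erase_time last_visit); split; [| reflexivity].
    exact (erase_time_lt w last_visit Hlast_visit).
Qed.

Lemma injective_leaves_finite_sets A (s : nat -> A) :
  (forall m n, s m = s n -> m = n) -> leaves_finite_sets s.
Proof.
  intros Hinj l; induction l as [| a l [N HN]].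
  - exists 0; intros n _ [].
  - destruct (classic (exists m, s m = a)) as [[m Hm] | Hnone].
    + exists (max N (S m)); intros n Hn [Heq | Hin].
      * assert (n = m) by (apply Hinj; congruence); lia.
      * apply (HN n); [lia | exact Hin].
    + exists N; intros n Hn [Heq | Hin].
      * apply Hnone; exists n; symmetry; exact Heq.
      * exact (HN n Hn Hin).
Qed.

Lemma finite_graph_enum V (H : graph V) :
  finite_graph H -> exists l, forall x, In x l <-> vert H x.
Proof.
  intros [l Hl].
  assert (Hfilter : exists l', forall x, In x l' <-> In x l /\ vert H x).
  { clear Hl; induction l as [| a l [l' IH]]; [exists nil; simpl; tauto |].
    destruct (classic (vert H a)) as [Ha | Ha];
      [exists (a :: l') | exists l']; intros x; simpl; rewrite IH;
      intuition congruence. }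
  destruct Hfilter as [l' Hl']; exists l'; intros x; rewrite Hl'.
  intuition.
Qed.

Lemma subgraph_is_ray V (A B : graph V) (r : nat -> V) :
  subgraph A B -> is_ray A r -> is_ray B r.
Proof. intros [HV HA] [Hinj [Hvert Hadj]]; repeat split; auto. Qed.

Section Cartesian.
Variables (V W : Type) (H : graph V) (D : graph W).

Lemma subgraph_cart (F : graph V) : subgraph F H -> subgraph (cart F D) (cart H D).
Proof. intros [HV HA]; split; simpl; intuition. Qed.

Lemma is_ray_cart_const (q : nat -> V) d :
  is_ray H q -> vert D d -> is_ray (cart H D) (fun n => (q n, d)).
Proof.
  intros [Hinj [Hvert Hadj]] Hd; split; [| split].
  - intros m n E; injection E; apply Hinj.
  - intros n; split; [apply Hvert | exact Hd].
  - intros n; left; simpl; auto.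
Qed.

Lemma cart_ray_fst_lazy_walk (r : nat -> V * W) :
  is_ray (cart H D) r -> lazy_walk H (fun n => fst (r n)).
Proof. intros [_ [_ Hadj]] n; destruct (Hadj n) as [[? _] | [? _]]; auto. Qed.

Lemma cart_ray_fst_leaves_finite_sets (r : nat -> V * W) :
  finite_graph D -> is_ray (cart H D) r -> leaves_finite_sets (fun n => fst (r n)).
Proof.
  intros [lD HlD] [Hinj [Hvert _]] S.
  destruct (injective_leaves_finite_sets _ Hinj (list_prod S lD)) as [N HN].
  exists N; intros n Hn Hin; apply (HN n Hn).
  destruct (r n) as [x d] eqn:Hr; apply in_prod; [exact Hin |].
  apply HlD; specialize (Hvert n); rewrite Hr in Hvert; apply Hvert.
Qed.

Lemma cart_ray_subsequence_ray (r : nat -> V * W) :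
  finite_graph D -> is_ray (cart H D) r ->
  exists p, is_ray H p /\ subsequence p (fun n => fst (r n)).
Proof.
  intros HD Hr; apply lazy_walk_subsequence_ray.
  - intros n; apply (proj1 (proj2 Hr) n).
  - exact (cart_ray_fst_lazy_walk Hr).
  - exact (cart_ray_fst_leaves_finite_sets HD Hr).
Qed.

Lemma rt_avoid_cart_fst (S : list V) (lD : list W) a b :
  (forall d, vert D d -> In d lD) ->
  clos_refl_trans _ (avoid_adj (cart H D) (list_prod S lD)) a b ->
  clos_refl_trans _ (avoid_adj H S) (fst a) (fst b).
Proof.
  intros HlD; induction 1 as [[x d] [y e] [Hadj [Ha Hb]] | | ].
  - simpl in Hadj; destruct Hadj as [[Hxy [<- Hd]] | [<- _]]; [| apply rt_refl].
    apply rt_step; repeat split; [exact Hxy | ..]; intros HS;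
      [apply Ha | apply Hb]; apply in_prod; auto.
  - apply rt_refl.
  - eapply rt_trans; eassumption.
Qed.

Lemma rt_avoid_cart_fst_lift (S' : list (V * W)) (S : list V) a b d :
  (forall x, In x S' -> In (fst x) S) -> vert D d ->
  clos_refl_trans _ (avoid_adj H S) a b ->
  clos_refl_trans _ (avoid_adj (cart H D) S') (a, d) (b, d).
Proof.
  intros HS Hd; induction 1 as [x y [Hxy [Hx Hy]] | | ].
  - apply rt_step; repeat split.
    + left; simpl; auto.
    + intros Hin; apply Hx, (HS _ Hin).
    + intros Hin; apply Hy, (HS _ Hin).
  - apply rt_refl.
  - eapply rt_trans; eassumption.
Qed.

Lemma rt_avoid_cart_snd_lift (S' : list (V * W)) (S : list V) a d e :
  (forall x, In x S' -> In (fst x) S) -> vert H a -> ~ In a S ->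
  clos_refl_trans _ (avoid_adj D nil) d e ->
  clos_refl_trans _ (avoid_adj (cart H D) S') (a, d) (a, e).
Proof.
  intros HS Ha HaS; induction 1 as [x y [Hxy _] | | ].
  - apply rt_step; repeat split; [right; simpl; auto | ..];
      intros Hin; apply HaS, (HS _ Hin).
  - apply rt_refl.
  - eapply rt_trans; eassumption.
Qed.

Lemma ray_equiv_cart_fst (s1 s2 : nat -> V * W) :
  finite_graph D -> ray_equiv (cart H D) s1 s2 ->
  ray_equiv H (fun n => fst (s1 n)) (fun n => fst (s2 n)).
Proof.
  intros HD Hequiv S HS.
  destruct (finite_graph_enum HD) as [lD HlD].
  destruct (Hequiv (list_prod S lD)) as [c [k1 [k2 [H1 H2]]]].
  { intros [x d] Hin; apply in_prod_iff in Hin.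
    split; [apply HS | apply HlD]; tauto. }
  assert (Hproj : forall y, conn_avoid (cart H D) (list_prod S lD) c y ->
                            conn_avoid H S (fst c) (fst y)).
  { intros y [[Hc Hd] [HcS Hcy]]; repeat split; [exact Hc | | ].
    - intros Hin; apply HcS; destruct c; apply in_prod; [exact Hin | apply HlD, Hd].
    - apply rt_avoid_cart_fst with (lD := lD); [apply HlD | exact Hcy]. }
  exists (fst c), k1, k2; split; intros n Hn; apply Hproj; auto.
Qed.

Lemma ray_equiv_fst_cart (s1 s2 : nat -> V * W) :
  connected_graph D ->
  (forall n, vert (cart H D) (s1 n)) -> (forall n, vert (cart H D) (s2 n)) ->
  ray_equiv H (fun n => fst (s1 n)) (fun n => fst (s2 n)) ->
  ray_equiv (cart H D) s1 s2.
Proof.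
  intros Hconn Hv1 Hv2 Hequiv S' HS'.
  destruct (Hequiv (map fst S')) as [c [k1 [k2 [H1 H2]]]].
  { intros x Hin; apply in_map_iff in Hin.
    destruct Hin as [y [<- Hy]]; apply (HS' y Hy). }
  assert (HS : forall x, In x S' -> In (fst x) (map fst S'))
    by (intros; apply in_map; assumption).
  set (d0 := snd (s1 0)).
  assert (Hd0 : vert D d0) by apply (Hv1 0).
  assert (Hlift : forall y, vert (cart H D) y ->
            conn_avoid H (map fst S') c (fst y) -> conn_avoid (cart H D) S' (c, d0) y).
  { intros [y e] [Hy He] [Hc [HcS Hcy]]; repeat split; [exact Hc | exact Hd0 | | ].
    - intros Hin; apply HcS, (HS _ Hin).
    - eapply rt_trans.
      + apply rt_avoid_cart_fst_lift with (S := map fst S'); eassumption.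
      + apply rt_avoid_cart_snd_lift with (S := map fst S');
          [exact HS | exact Hy | exact (rt_avoid_notin Hcy HcS) |].
        apply (Hconn d0 e Hd0 He). }
  exists (c, d0), k1, k2; split; intros n Hn; apply Hlift; auto.
Qed.

Lemma cart_ray_equiv_subsequence_ray (r1 r2 : nat -> V * W) (p1 p2 : nat -> V) :
  finite_graph D -> connected_graph D ->
  is_ray (cart H D) r1 -> is_ray (cart H D) r2 ->
  subsequence p1 (fun n => fst (r1 n)) -> subsequence p2 (fun n => fst (r2 n)) ->
  (ray_equiv (cart H D) r1 r2 <-> ray_equiv H p1 p2).
Proof.
  intros HD Hconn Hr1 Hr2 Hp1 Hp2.
  rewrite <- (ray_equiv_same_tails
    (same_tails_subsequence (cart_ray_fst_lazy_walk Hr1)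
                            (cart_ray_fst_leaves_finite_sets HD Hr1) Hp1)
    (same_tails_subsequence (cart_ray_fst_lazy_walk Hr2)
                            (cart_ray_fst_leaves_finite_sets HD Hr2) Hp2)).
  split; [apply ray_equiv_cart_fst; exact HD |].
  apply ray_equiv_fst_cart; [exact Hconn | apply Hr1 | apply Hr2].
Qed.

End Cartesian.

Theorem lemma18 (V W : Type) (G F : graph V) (D : graph W) :
  wf_graph G -> infinite_graph G -> locally_finite G ->
  wf_graph F -> subgraph F G ->
  wf_graph D -> finite_graph D -> connected_graph D ->
  faithful F G -> faithful (cart F D) (cart G D).
Proof.
  intros _ _ _ _ HFG _ HD Hconn [Hends Hequiv].
  pose proof (subgraph_cart D HFG) as HFG_D.
  split.
  - intros r Hr.
    destruct (cart_ray_subsequence_ray HD Hr) as [p [Hp Hsub]].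
    destruct (Hends p Hp) as [q [Hq Hpq]].
    assert (Hq_D : is_ray (cart F D) (fun n => (q n, snd (r 0))))
      by (apply is_ray_cart_const; [exact Hq | apply (proj1 (proj2 Hr) 0)]).
    exists (fun n => (q n, snd (r 0))); split; [exact Hq_D |].
    apply (cart_ray_equiv_subsequence_ray HD Hconn Hr (subgraph_is_ray HFG_D Hq_D)
             Hsub (subsequence_refl q)).
    exact Hpq.
  - intros r1 r2 Hr1 Hr2.
    destruct (cart_ray_subsequence_ray HD Hr1) as [p1 [Hp1 Hsub1]].
    destruct (cart_ray_subsequence_ray HD Hr2) as [p2 [Hp2 Hsub2]].
    rewrite (cart_ray_equiv_subsequence_ray HD Hconn Hr1 Hr2 Hsub1 Hsub2).
    rewrite (cart_ray_equiv_subsequence_ray HD Hconn (subgraph_is_ray HFG_D Hr1)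
               (subgraph_is_ray HFG_D Hr2) Hsub1 Hsub2).
    apply Hequiv; assumption.
Qed.
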